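(* Let $q$ be a prime power and let $X \subset \mathbb{P}^2$ be the Hermitian curve over $\mathbb{F}_{q^2}$, the projective closure of the affine curve $x^{q+1} = y^q + y$. Let $P_0$ be its unique point at infinity, let $\rho$ be an integer with $0 \le \rho \le q^2-q-2$ and $G = \rho P_0$, let $P_1,\dots,P_n$, $n = q^3$, be the affine $\mathbb{F}_{q^2}$-rational points of $X$, and $D = P_1+\cdots+P_n$. Let $d$ be the minimum distance of the Hermitian code $C(D,G)^*$, and assume that $L(G) = H^0(\mathbb{P}^2, \mathcal{O}_{\mathbb{P}^2}(d-2))$, i.e. $L(G)$ equals the space of restrictions to $X$ of polynomials in $x,y$ of degree at most $d-2$. Let $a$ be an integer with $0 \le a \le d-3$ and let $\{P_{i_1},\ldots,P_{i_{d+a}}\}$ be the points $P_i$ with nonzero coordinate in a codeword of $C(D,G)^*$ of weight $d+a$. Then at least $d-1$ of the points $P_{i_1},\ldots,P_{i_{d+a}}$ are collinear.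
   Context: $L(G)$ is the Riemann–Roch space of rational functions $f$ on $X$ with $f=0$ or $\mathrm{div}(f)+G \ge 0$. $C(D,G) = \{(f(P_1),\dots,f(P_n)) : f \in L(G)\}$ and the Hermitian code $C(D,G)^*$ is its dual: the set of $c \in \mathbb{F}_{q^2}^n$ with $\sum_i c_i f(P_i) = 0$ for all $f \in L(G)$. Weight = number of nonzero coordinates; minimum distance = minimum weight of a nonzero codeword. *)

From HB Require Import structures.
From mathcomp Require Import all_boot all_order all_algebra all_field.
From mathcomp Require Import mpoly.
Set Implicit Arguments. Unset Strict Implicit. Unset Printing Implicit Defensive.
Import GRing.Theory.
Local Open Scope ring_scope.

Definition xvar : 'I_2 := ord0.
Definition yvar : 'I_2 := ord_max.

Definition hermH (F : fieldType) (q : nat) : {mpoly F[2]} :=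
  'X_xvar ^+ q.+1 - 'X_yvar ^+ q - 'X_yvar.

Definition ev (F : fieldType) (v : F * F) : 'I_2 -> F :=
  fun i => if i == xvar then v.1 else v.2.

Definition onX (F : fieldType) (q : nat) (v : F * F) : bool :=
  v.1 ^+ q.+1 == v.2 ^+ q + v.2.

(* f (a polynomial, viewed in the coordinate ring F[x,y]/(H)) lies in
   L(rho P0): f is congruent mod H to a combination of monomials x^i y^j
   of pole order i*q + j*(q+1) <= rho at P0. *)
Definition inLG (F : fieldType) (q rho : nat) (f : {mpoly F[2]}) : Prop :=
  exists g h : {mpoly F[2]}, f = g + h * hermH F q /\
    forall m, m \in msupp g -> (q * m xvar + q.+1 * m yvar <= rho)%N.

(* c (a vector indexed by the affine rational points, zero elsewhere) is in
   the Hermitian code C(D,G)^*. *)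
Definition in_dual (F : finFieldType) (q rho : nat) (c : F * F -> F) : Prop :=
  (forall v, ~~ onX q v -> c v = 0) /\
  forall f, inLG q rho f -> \sum_(v : F * F | onX q v) c v * f.@[ev v] = 0.

Definition weight (F : finFieldType) (c : F * F -> F) : nat :=
  #|[set v : F * F | c v != 0]|.

Definition supp_on_line (F : finFieldType) (c : F * F -> F) (al be ga : F)
  : {set F * F} :=
  [set v : F * F | (c v != 0) && (al * v.1 + be * v.2 + ga == 0)].

From HB Require Import structures.
From mathcomp Require Import all_boot all_order all_algebra all_field.
From mathcomp Require Import mpoly.
From mathcomp Require Import ring zify.
Set Implicit Arguments. Unset Strict Implicit. Unset Printing Implicit Defensive.
Import GRing.Theory.
Local Open Scope ring_scope.

(** Suppose no line contains [d - 1] support points of [c] and fix a support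
    point [P].  The other [d + a - 1 <= 2 (d - 2)] support points meet each line
    through [P] in at most [d - 3] points, so they can be grouped into at most
    [d - 2] sets of one or two points, the two points of a pair lying in
    different directions from [P]: repeatedly take one point from each of the
    two largest directions.  The line through each group misses [P], and the
    product of these lines is a polynomial of degree at most [d - 2] vanishing
    on the support of [c] except at [P].  It lies in [L(G)], so orthogonality
    of [c] to it forces [c P = 0]. *)

Section Fibers.
Variables (T : finType) (Y : eqType) (g : T -> Y).
Implicit Types (A B : {set T}) (x y : T).
Local Open Scope nat_scope.

Definition fiber (A : {set T}) (x : T) : {set T} := [set y in A | g y == g x].

Lemma fiber_subset A x : fiber A x \subset A.
Proof. by apply/subsetP => y; rewrite inE => /andP[]. Qed.

Lemma fiberS A B x : A \subset B -> fiber A x \subset fiber B x.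
Proof.
by move=> /subsetP sAB; apply/subsetP => y; rewrite !inE => /andP[/sAB -> ->].
Qed.

Lemma fiberI0 A x y : g x != g y -> fiber A x :&: fiber A y = set0.
Proof.
move=> gxy; apply/setP => z; rewrite !inE.
by apply: contraNF gxy => /andP[/andP[_ /eqP <-] /andP[_ /eqP <-]].
Qed.

Lemma card_fiber_setD A B x y :
  B \subset A -> y \in fiber A x -> y \notin B -> #|fiber B x| < #|fiber A x|.
Proof.
move=> sBA yA yB; apply: proper_card; rewrite properEneq fiberS // andbT.
by apply: contraNneq yB => eBA; rewrite -eBA in yA; exact: subsetP (fiber_subset B x) y yA.
Qed.

Lemma card_fiber_setD2 n A Q R :
  Q \in A -> R \in A -> g R != g Q ->
  (forall V, V \in A -> #|fiber A V| <= #|fiber A Q|) ->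
  (forall V, V \in A -> g V != g Q -> #|fiber A V| <= #|fiber A R|) ->
  #|A| <= 2 * n.+1 -> #|fiber A Q| <= n.+1 ->
  forall V, V \in A :\ Q :\ R -> #|fiber (A :\ Q :\ R) V| <= n.
Proof.
move=> QA RA gRQ Qmax Rmax hA hQ V; rewrite !inE => /and3P[_ _ VA].
have sA : A :\ Q :\ R \subset A by rewrite setDDl subsetDl.
have QV_max := Qmax V VA.
have [gVQ|nVQ] := eqVneq (g V) (g Q).
  have QV : Q \in fiber A V by rewrite inE QA gVQ eqxx.
  have QA' : Q \notin A :\ Q :\ R by rewrite !inE eqxx /= andbF.
  by have := card_fiber_setD sA QV QA'; lia.
have RV_max := Rmax V VA nVQ; have RQ_max := Qmax R RA.
have [gVR|nVR] := eqVneq (g V) (g R).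
  have RV : R \in fiber A V by rewrite inE RA gVR eqxx.
  have RA' : R \notin A :\ Q :\ R by rewrite !inE eqxx.
  by have := card_fiber_setD sA RV RA'; lia.
have card3 : #|fiber A V :|: fiber A Q :|: fiber A R|
    = #|fiber A V| + #|fiber A Q| + #|fiber A R|.
  have gQR : g Q != g R by rewrite eq_sym.
  rewrite cardsU setIUl (fiberI0 _ nVR) (fiberI0 _ gQR) setU0 cards0 subn0.
  by rewrite cardsU (fiberI0 _ nVQ) cards0 subn0.
have : #|fiber A V :|: fiber A Q :|: fiber A R| <= #|A|.
  by apply: subset_leq_card; rewrite !subUset !fiber_subset.
have := subset_leq_card (fiberS V sA).
by rewrite card3; lia.
Qed.

End Fibers.

Lemma msize_mul_le (R : idomainType) (k : nat) (p q : {mpoly R[k]}) m n :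
  (msize p <= m.+1)%N -> (msize q <= n.+1)%N -> (msize (p * q) <= (m + n).+1)%N.
Proof.
have [->|p0] := eqVneq p 0; first by rewrite mul0r msize0.
have [->|q0] := eqVneq q 0; first by rewrite mulr0 msize0.
by rewrite msizeM //; lia.
Qed.

Section Lines.
Variable F : fieldType.

Definition line_poly (al be ga : F) : {mpoly F[2]} :=
  al *: 'X_xvar + be *: 'X_yvar + ga%:MP.

Lemma meval_line_poly al be ga v :
  (line_poly al be ga).@[ev v] = al * v.1 + be * v.2 + ga.
Proof. by rewrite !(mevalD, mevalZ, mevalXU) mevalC /ev eqxx. Qed.

Lemma msize_line_poly al be ga : (msize (line_poly al be ga) <= 2)%N.
Proof.
have msizeXZ b i : (msize (b *: 'X_i : {mpoly F[2]}) <= 2)%N.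
  by apply: leq_trans (msizeZ_le _ _) _; rewrite msizeX mdeg1.
rewrite /line_poly; apply: leq_trans (msizeD_le _ _) _.
rewrite geq_max msizeC (leq_trans (leq_b1 _)) // andbT.
by apply: leq_trans (msizeD_le _ _) _; rewrite geq_max !msizeXZ.
Qed.

Variable P : F * F.

(* The direction of [Q - P], normalised to [(0, 1)] or [(1, slope)]: two points
   other than [P] have the same direction iff they are collinear with [P]. *)
Definition direction (Q : F * F) : F * F :=
  if Q.1 == P.1 then (0, 1) else (1, (Q.2 - P.2) / (Q.1 - P.1)).

Lemma direction_neq0 Q : ((direction Q).1 != 0) || ((direction Q).2 != 0).
Proof. by rewrite /direction; case: ifP => _ /=; rewrite oner_eq0 ?orbT. Qed.

Lemma sub_direction Q : Q != P -> exists2 l : F, l != 0 &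
  Q.1 - P.1 = l * (direction Q).1 /\ Q.2 - P.2 = l * (direction Q).2.
Proof.
move=> QP; rewrite /direction; case: eqP => [e1|/eqP n1] /=.
  exists (Q.2 - P.2); last by rewrite e1 subrr mulr0 mulr1.
  rewrite subr_eq0; apply: contra QP => /eqP e2.
  by rewrite [Q]surjective_pairing [P]surjective_pairing e1 e2.
exists (Q.1 - P.1); first by rewrite subr_eq0.
by rewrite mulr1 mulrC divfK // subr_eq0.
Qed.

Lemma direction_det_neq0 Q R : direction Q != direction R ->
  (direction Q).1 * (direction R).2 - (direction Q).2 * (direction R).1 != 0.
Proof.
rewrite /direction; case: ifP => _; case: ifP => _ /=; rewrite ?eqxx //;
  rewrite ?(mul0r, mul1r, mulr1, mulr0, subr0, sub0r, oppr_eq0, oner_eq0) //.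
by rewrite subr_eq0; apply: contra => /eqP ->.
Qed.

Lemma line_through_direction Q : exists al be ga : F,
  [/\ al != 0 \/ be != 0, al * P.1 + be * P.2 + ga = 0 &
      forall R, R != P -> direction R = direction Q ->
        al * R.1 + be * R.2 + ga = 0].
Proof.
exists (direction Q).2, (- (direction Q).1),
  (- ((direction Q).2 * P.1 - (direction Q).1 * P.2)).
split=> [||R RP dRQ]; first by apply/orP; rewrite oppr_eq0 orbC direction_neq0.
  by ring.
have [l _ [e1 e2]] := sub_direction RP.
have -> : (direction Q).2 * R.1 + - (direction Q).1 * R.2
    + - ((direction Q).2 * P.1 - (direction Q).1 * P.2)
  = (direction Q).2 * (R.1 - P.1) - (direction Q).1 * (R.2 - P.2) by ring.
by rewrite e1 e2 dRQ; ring.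
Qed.

Lemma line_through1 Q : Q != P -> exists l : {mpoly F[2]},
  [/\ (msize l <= 2)%N, l.@[ev P] != 0 & l.@[ev Q] = 0].
Proof.
move=> QP; have [e|n1] := eqVneq Q.1 P.1.
  exists (line_poly 0 1 (- Q.2)); rewrite !meval_line_poly msize_line_poly.
  rewrite !(mul0r, mul1r, add0r) subrr subr_eq0; split=> //.
  apply: contra QP => /eqP e2.
  by rewrite [Q]surjective_pairing [P]surjective_pairing e e2.
exists (line_poly 1 0 (- Q.1)); rewrite !meval_line_poly msize_line_poly.
by rewrite !(mul0r, mul1r, addr0) subrr subr_eq0 eq_sym.
Qed.

Lemma line_through2 Q R : Q != P -> R != P -> direction Q != direction R ->
  exists l : {mpoly F[2]},
    [/\ (msize l <= 2)%N, l.@[ev P] != 0, l.@[ev Q] = 0 & l.@[ev R] = 0].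
Proof.
move=> QP RP dQR.
exists (line_poly (R.2 - Q.2) (Q.1 - R.1)
                  (- ((R.2 - Q.2) * Q.1 + (Q.1 - R.1) * Q.2))).
rewrite !meval_line_poly msize_line_poly; split=> //; try ring.
have [l l0 [e1 e2]] := sub_direction QP; have [m m0 [f1 f2]] := sub_direction RP.
have -> : (R.2 - Q.2) * P.1 + (Q.1 - R.1) * P.2
    + - ((R.2 - Q.2) * Q.1 + (Q.1 - R.1) * Q.2)
  = (R.1 - P.1) * (Q.2 - P.2) - (R.2 - P.2) * (Q.1 - P.1) by ring.
rewrite e1 e2 f1 f2.
have -> : m * (direction R).1 * (l * (direction Q).2)
    - m * (direction R).2 * (l * (direction Q).1)
  = - (l * m) * ((direction Q).1 * (direction R).2
                 - (direction Q).2 * (direction R).1) by ring.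
by rewrite mulf_neq0 ?direction_det_neq0 // oppr_eq0 mulf_neq0.
Qed.

End Lines.

Section Separation.
Variables (F : finFieldType) (P : F * F).

Definition separating (n : nat) (T : {set F * F}) (f : {mpoly F[2]}) :=
  [/\ (msize f <= n.+1)%N, f.@[ev P] != 0 & {in T, forall v, f.@[ev v] = 0}].

Lemma separating_mul n (T T' : {set F * F}) f l :
  separating n T' f -> (msize l <= 2)%N -> l.@[ev P] != 0 ->
  (forall v, v \in T -> v \notin T' -> l.@[ev v] = 0) ->
  separating n.+1 T (f * l).
Proof.
move=> [fn fP fT'] ln lP lT; split.
- by have := msize_mul_le fn ln; rewrite addn1.
- by rewrite mevalM mulf_neq0.
move=> v vT; rewrite mevalM; have [vT'|vT'] := boolP (v \in T'); first by rewrite fT' ?mul0r.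
by rewrite lT ?mulr0.
Qed.

Lemma separating_exists n (T : {set F * F}) :
  P \notin T -> (#|T| <= 2 * n)%N ->
  (forall Q, Q \in T -> #|fiber (direction P) T Q| <= n)%N ->
  exists f, separating n T f.
Proof.
elim: n T => [|n IH] T PT hT hfib.
  exists 1; split=> [||v]; rewrite ?msize1 ?meval1 ?oner_eq0 //.
  by move: hT; rewrite muln0 leqn0 cards_eq0 => /eqP ->; rewrite inE.
have [T0|[x xT]] := set_0Vmem T.
  by exists 1; split=> [||v]; rewrite ?msize1 ?meval1 ?oner_eq0 ?T0 ?inE.
have notP V : V \in T -> V != P by move=> VT; apply: contraNneq PT => <-.
have [Q QT Qmax] := @arg_maxnP _ x (mem T) (fun V => #|fiber (direction P) T V|) xT.
have {}QT : Q \in T := QT.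
have [U0|[y yU]] := set_0Vmem (T :\: fiber (direction P) T Q).
  have [l [ln lP lQ]] := line_through1 (notP Q QT).
  have hT' : (#|T :\ Q| <= n)%N.
    have /subset_leq_card : T \subset fiber (direction P) T Q by rewrite -setD_eq0 U0.
    rewrite (cardsD1 Q T) QT add1n => lt_TQ; exact: leq_trans lt_TQ (hfib Q QT).
  have [|||f sep_f] := IH (T :\ Q); rewrite ?inE ?(negbTE PT) ?andbF //; first lia.
    by move=> V _; apply: leq_trans (subset_leq_card (fiber_subset _ _ _)) hT'.
  exists (f * l); apply: separating_mul sep_f ln lP _ => v vT.
  by rewrite !inE vT andbT negbK => /eqP ->.
have [R RU Rmax] :=
  @arg_maxnP _ y (mem (T :\: fiber (direction P) T Q))
    (fun V => #|fiber (direction P) T V|) yU.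
have /setDP[RT RnQ] : R \in T :\: fiber (direction P) T Q := RU.
have dRQ : direction P R != direction P Q.
  by apply: contraNneq RnQ => e; rewrite inE RT e eqxx.
have [l [ln lP lR lQ]] := line_through2 (notP R RT) (notP Q QT) dRQ.
have [|||f sep_f] := IH (T :\ Q :\ R); rewrite ?inE ?(negbTE PT) ?andbF //.
- have RQ : R != Q by apply: contraNneq dRQ => ->.
  by move: hT; rewrite (cardsD1 Q T) QT (cardsD1 R (T :\ Q)) !inE RT RQ; lia.
- apply: (card_fiber_setD2 QT RT dRQ Qmax _ hT (hfib Q QT)) => V VT nVQ.
  by apply: Rmax; apply/setDP; rewrite inE VT.
exists (f * l); apply: separating_mul sep_f ln lP _ => v vT.
rewrite !inE vT !andbT negb_and !negbK.
by case/orP => /eqP ->.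
Qed.

End Separation.

Lemma in_dual_single_support (F : finFieldType) q rho c f (P : F * F) :
  in_dual q rho c -> inLG q rho f ->
  (forall v, v != P -> c v != 0 -> f.@[ev v] = 0) -> c P * f.@[ev P] = 0.
Proof.
move=> [c_offX c_orth] f_LG f_van.
have [PX|PnX] := boolP (onX q P); last by rewrite c_offX ?mul0r.
rewrite -[RHS](c_orth f f_LG) (bigD1 P) //= big1 ?addr0 // => v /andP[_ vP].
by have [->|cv] := eqVneq (c v) 0; rewrite ?mul0r // f_van ?mulr0.
Qed.

Lemma card_fiber_lt_supp_on_line (F : finFieldType) (c : F * F -> F)
  (P Q : F * F) : c P != 0 -> exists al be ga : F,
    ((al != 0) || (be != 0)) /\
    (#|fiber (direction P) ([set v | c v != 0%R] :\ P) Q|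
       < #|supp_on_line c al be ga|)%N.
Proof.
move=> cP; have [al [be [ga [/orP hab lP lQ]]]] := line_through_direction P Q.
exists al, be, ga; split=> //.
set A := fiber _ _ Q; have PA : P \notin A by rewrite !inE eqxx.
have := cardsU1 P A; rewrite PA add1n => <-.
apply/subset_leq_card/subsetP => R; rewrite !inE.
case/orP=> [/eqP ->|/andP[/andP[RP cR] /eqP dRQ]]; first by rewrite cP lP eqxx.
by rewrite cR lQ ?eqxx.
Qed.

Theorem proposition1 (F : finFieldType) (q rho d a : nat)
  (hq : exists p k : nat, [/\ prime p, (0 < k)%N & q = (p ^ k)%N])
  (hF : #|F| = (q ^ 2)%N)
  (hrho : (rho + q + 2 <= q ^ 2)%N)
  (hd_att : exists c : F * F -> F,
      [/\ in_dual q rho c, exists v, c v != 0 & weight c = d])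
  (hd_min : forall c : F * F -> F,
      in_dual q rho c -> (exists v, c v != 0) -> (d <= weight c)%N)
  (hLG : forall f : {mpoly F[2]}, inLG q rho f <->
      exists g h : {mpoly F[2]}, f = g + h * hermH F q /\ (msize g <= d - 1)%N)
  (ha : (a + 3 <= d)%N)
  (c : F * F -> F) (hc : in_dual q rho c) (hw : weight c = (d + a)%N) :
  exists al be ga : F, (al != 0 \/ be != 0) /\
    (d - 1 <= #|supp_on_line c al be ga|)%N.
Proof.
(* Only the inclusion of polynomials of degree [<= d - 2] in [L(G)] is used. *)
have [/existsP[al /existsP[be /existsP[ga /andP[/orP hab long]]]] | /existsPn short]
  := boolP [exists al, exists be, exists ga,
             ((al != 0) || (be != 0)) && (d - 1 <= #|supp_on_line c al be ga|)%N].
  by exists al, be, ga.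
exfalso; set S := [set v | c v != 0]; have hS : #|S| = (d + a)%N := hw.
have [P PS] : exists P, P \in S by apply/set0Pn; rewrite -cards_eq0 hS; lia.
set T := S :\ P; have PT : P \notin T by rewrite setD11.
have hT : (#|T| <= 2 * (d - 2))%N.
  by move: hS; rewrite (cardsD1 P) PS add1n => hS; rewrite -ltnS hS; lia.
have cP : c P != 0 by move: PS; rewrite inE.
have hfib Q : Q \in T -> (#|fiber (direction P) T Q| <= d - 2)%N.
  move=> _; have [al [be [ga [hab lt_line]]]] := card_fiber_lt_supp_on_line Q cP.
  have /existsPn/(_ be)/existsPn/(_ ga) := short al.
  rewrite hab /= -ltnNge => /(ltn_trans lt_line).
  by move: #|fiber _ _ _| => k; lia.
have [f [fn fP fT]] := separating_exists PT hT hfib.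
have f_LG : inLG q rho f by apply/hLG; exists f, 0; rewrite mul0r addr0; split=> //; lia.
have f_van v : v != P -> c v != 0 -> f.@[ev v] = 0.
  by move=> vP cv; rewrite fT // !inE vP cv.
by move: (mulf_neq0 cP fP); rewrite (in_dual_single_support hc f_LG f_van) eqxx.
Qed.
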